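(* Let $F$ be a positively expansive cellular automaton on $A^{\mathbb Z}$ and $\mu$ a $\sigma$-ergodic, $F$-invariant Borel probability measure. Then there exists a real $s>0$ such that $M_\mu((s,s))=1$.
   Context: $A$ is a finite alphabet, $\sigma(x)_i=x_{i+1}$, and $d(x,y)=2^{-\min\{|j|: x_j\ne y_j\}}$. $F$ is a cellular automaton of radius $r$, i.e. $F(x)_i=f(x_{i-r},\dots,x_{i+r})$. $B_n(x)=\{y: d(F^ix,F^iy)<2^{-n}\ \forall i\ge0\}$. $F$ is positively expansive if there is $n$ with $B_n(x)=\{x\}$ for all $x$. For $p\ge0$: ${}^{\{n\}}\alpha_p^F(x)=\{y:F^i(y)_j=F^i(x)_j\ \forall0\le i\le n,\ |j|\le p\}$. For a speed given by $g^\pm_n:A^{\mathbb Z}\to\mathbb N$, set $|G_n(x)|=g^+_n(x)+g^-_n(x)+1$ and $J_n(x)=\{j:-g^+_n(x)-p\le j\le g^-_n(x)+p\}$. For $y\in A^{\mathbb Z}$, ${}^{G_n(x)}\alpha_p^\sigma(y)=\{z:z_j=y_j\ \forall j\in J_n(x)\}$. For $0<\delta<1$, $\eta_{n,\delta}$ is the infimum of $\varepsilon>0$ such that some measurable $S$ with $\mu(S)\ge1-\delta$ satisfies $$\Big|\frac{-\log\mu({}^{G_i(x)}\alpha_p^\sigma(x))}{|G_i(x)|}-h_\mu(\sigma)\Big|<\varepsilon\quad\text{for all } x\in S,\ i\ge n.$$ $X^G_{n,\delta,p}$ is the set of $x$ for which this quantity, taken with $i=n$, is $\le\eta_{n,\delta}$.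 $\langle T^G_{n,p}(x)\rangle=\{z|_{J_n(x)}:z\in{}^{\{n\}}\alpha_p^F(x)\}$, and $T^G_{n,p}(x)$ is the union of the cylinders $\{z:z|_{J_n(x)}=w\}$ over these $w$. $T^G_{n,\delta,p}(x)=T^G_{n,p}(x)\cap X^G_{n,\delta,p}$ and $\langle T^G_{n,\delta,p}(x)\rangle=\{z|_{J_n(x)}:z\in T^G_{n,\delta,p}(x)\}$. $$M_{n,p,\delta}(G)=\int\Big(1-\frac{\log\#\langle T^G_{n,\delta,p}(x)\rangle}{-\log\mu({}^{G_n(x)}\alpha_p^\sigma(x))}\Big)d\mu(x),\qquad M_\mu(G)=\sup_p\limsup_{\delta\to0}\limsup_{n\to\infty}M_{n,p,\delta}(G).$$ $M_\mu((s,s))$ denotes $M_\mu(G)$ for $g^+_n=g^-_n=\lceil sn\rceil$. *)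

From HB Require Import structures.
From mathcomp Require Import all_boot all_order all_algebra.
From mathcomp Require Import all_classical all_reals all_analysis.
Set Implicit Arguments. Unset Strict Implicit. Unset Printing Implicit Defensive.
Import Order.TTheory GRing.Theory Num.Theory.
Import numFieldNormedType.Exports.
Local Open Scope classical_set_scope.
Local Open Scope ring_scope.

Definition cfg (A : finType) (a0 : A) := int -> A.
HB.instance Definition _ (A : finType) (a0 : A) :=
  Choice.copy (cfg a0) (int -> A).
HB.instance Definition _ (A : finType) (a0 : A) :=
  isPointed.Build (cfg a0) (fun _ => a0).

Section Config.
Variables (A : finType) (a0 : A).

(* central cylinders [set x | x_j = y_j for |j| <= n]: they generate the
   Borel sigma-algebra of the product (Cantor) topology on A^Z *)
Definition cylinders : set (set (cfg a0)) :=
  [set C | exists (n : nat) (y : cfg a0),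
      C = [set x | forall j : int, (`|j| <= n)%N -> x j = y j]].

End Config.

Definition Cfg (A : finType) (a0 : A) := g_sigma_algebraType (@cylinders A a0).
HB.instance Definition _ (A : finType) (a0 : A) :=
  Measurable.copy (Cfg a0) (g_sigma_algebraType (@cylinders A a0)).

Definition sigma_shift (A : Type) (x : int -> A) : int -> A := fun i => x (i + 1).

Definition cell_aut (A : Type) (r : nat) (f : (r.*2.+1).-tuple A -> A)
  (x : int -> A) : int -> A :=
  fun i => f [tuple x (i - r%:Z + k%:Z) | k < r.*2.+1].

(* the Cantor metric d(x,y) = 2^{-min{|j| : x_j <> y_j}}  (= 0 if x = y) *)
Definition cdist (R : realType) (A : eqType) (x y : int -> A) : R :=
  sup [set (2%:R : R) ^- `|j|%N | j in [set j : int | x j != y j]].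

Definition Bn (R : realType) (A : eqType) (F : (int -> A) -> int -> A)
  (n : nat) (x : int -> A) : set (int -> A) :=
  [set y | forall i : nat, cdist R (iter i F x) (iter i F y) < (2%:R : R) ^- n].

Definition pos_expansive (R : realType) (A : eqType)
  (F : (int -> A) -> int -> A) : Prop :=
  exists n : nat, forall x, Bn R F n x = [set x].

Section Measures.
Context {R : realType} {d : measure_display} {T : measurableType d}.
Variable mu : probability T R.

Definition measure_invariant (Tr : T -> T) : Prop :=
  forall S, measurable S -> mu (Tr @^-1` S) = mu S.

Definition measure_ergodic (Tr : T -> T) : Prop :=
  measure_invariant Tr /\
  forall S, measurable S -> Tr @^-1` S = S -> mu S = 0%E \/ mu S = 1%E.

Definition plogp (t : R) : R := t * ln t.

Definition Hpart (k n : nat) (g : T -> n.-tuple 'I_k) : R :=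
  - \sum_(v : n.-tuple 'I_k) plogp (fine (mu (g @^-1` [set v]))).

(* h_mu(Tr, xi) = lim_n (1/n) H(xi v Tr^{-1} xi v ... v Tr^{-(n-1)} xi) *)
Definition part_entropy (Tr : T -> T) (k : nat) (xi : T -> 'I_k) : R :=
  limn (fun n : nat =>
    Hpart (fun x => [tuple xi (iter i Tr x) | i < n]) / n%:R).

Definition ks_entropy (Tr : T -> T) : R :=
  sup [set h | exists (k : nat) (xi : T -> 'I_k),
         (forall i, measurable (xi @^-1` [set i])) /\ h = part_entropy Tr xi].

End Measures.

Section Mmu.
Variables (R : realType) (A : finType) (a0 : A).
Variable mu : probability (Cfg a0) R.
Variable F : Cfg a0 -> Cfg a0.
Variables (gp gm : nat -> Cfg a0 -> nat).

Definition hsig : R := ks_entropy mu (@sigma_shift A).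

Definition Gsize (n : nat) (x : Cfg a0) : nat := (gp n x + gm n x + 1)%N.

Definition inJ (n p : nat) (x : Cfg a0) (j : int) : Prop :=
  - ((gp n x + p)%N%:Z) <= j <= (gm n x + p)%N%:Z.

Definition cylG (n p : nat) (x y : Cfg a0) : set (Cfg a0) :=
  [set z | forall j, inJ n p x j -> z j = y j].

Definition ratioG (p i : nat) (x : Cfg a0) : R :=
  - ln (fine (mu (cylG i p x x))) / (Gsize i x)%:R.

Definition eta (p n : nat) (delta : R) : R :=
  inf [set eps : R | 0 < eps /\
         exists S : set (Cfg a0), measurable S /\ ((1 - delta)%:E <= mu S)%E /\
           forall x, S x -> forall i : nat, (n <= i)%N ->
             `|ratioG p i x - hsig| < eps].

Definition XG (n : nat) (delta : R) (p : nat) : set (Cfg a0) :=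
  [set x | `|ratioG p n x - hsig| <= eta p n delta].

Definition alphaF (n p : nat) (x : Cfg a0) : set (Cfg a0) :=
  [set y | forall i : nat, (i <= n)%N -> forall j : int, (`|j| <= p)%N ->
     iter i F y j = iter i F x j].

Definition TG (n p : nat) (x : Cfg a0) : set (Cfg a0) :=
  [set z | exists y, alphaF n p x y /\ forall j, inJ n p x j -> z j = y j].

Definition TGd (n : nat) (delta : R) (p : nat) (x : Cfg a0) : set (Cfg a0) :=
  TG n p x `&` XG n delta p.

Definition wordJ (n p : nat) (x z : Cfg a0) :
  (gp n x + gm n x + p.*2 + 1).-tuple A :=
  [tuple z (- ((gp n x + p)%N%:Z) + k%:Z) | k < (gp n x + gm n x + p.*2 + 1)%N].

Definition countTGd (n : nat) (delta : R) (p : nat) (x : Cfg a0) : nat :=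
  #|[set w | `[< exists z, TGd n delta p x z /\ wordJ n p x z = w >]]|.

Definition Mnpd (n p : nat) (delta : R) : \bar R :=
  (\int[mu]_x (1 - ln (countTGd n delta p x)%:R
                    / (- ln (fine (mu (cylG n p x x)))))%:E)%E.

Definition Mmu : \bar R :=
  ereal_sup [set limf_esup (fun delta : R => limn_esup (fun n => Mnpd n p delta))
                           (0 : R)^'+ | p in [set: nat]].

End Mmu.

Definition cspeed (R : realType) (T : Type) (s : R) (n : nat) (_ : T) : nat :=
  `|Num.ceil (s * n%:R)|%N.

(* Positive expansiveness says that two configurations whose orbits agree on
   the window [-m, m] forever are equal.  A Koenig-type compactness argument on
   A^Z turns this into a finite time N: agreement of the first N iterates on
   [-m, m] forces agreement on [-(m+1), m+1].  Translating and iterating,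
   agreement of the first tN iterates on [-p, p] (p >= m) forces agreement on
   [-(p+t), p+t].  For s = 1/(2N) one has ceil(sn) N <= n once n >= 2N, so the
   cylinder {n}alpha_p^F(x) determines x on the whole window J_n(x): the set
   <T^G_{n,delta,p}(x)> contains at most one word and the integrand of
   M_{n,p,delta} is 1, while it never exceeds 1. *)

From HB Require Import structures.
From mathcomp Require Import all_boot all_order all_algebra.
From mathcomp Require Import all_classical all_reals all_analysis.
From mathcomp Require Import measurable_realfun zify lra.
Set Implicit Arguments. Unset Strict Implicit. Unset Printing Implicit Defensive.
Import Order.TTheory GRing.Theory Num.Theory.
Import numFieldNormedType.Exports.
Local Open Scope classical_set_scope.
Local Open Scope ring_scope.

Section limf_esup_bounds.
Local Open Scope ereal_scope.
Context {R : realType} {T0 : choiceType} {T : filteredType T0}.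
Variables (F : set_system T) (f : T -> \bar R) (c : \bar R).

Lemma limf_esup_le : Filter F -> (forall t, f t <= c) -> limf_esup f F <= c.
Proof.
move=> FF fc; apply: le_trans (ereal_inf_lbound _) _.
  by exists setT => //; exact: filterT.
by apply: ge_ereal_sup => _ [t _ <-].
Qed.

Lemma limf_esup_near_cst : ProperFilter F ->
  (\forall t \near F, f t = c) -> limf_esup f F = c.
Proof.
move=> FF fc; apply/le_anti/andP; split.
  apply: le_trans (ereal_inf_lbound _) _; first by exists [set t | f t = c].
  by apply: ge_ereal_sup => _ [t /= -> <-].
apply: le_ereal_inf_tmp => _ [V FV <-].
have [t [Vt <-]] := filter_ex (filterI FV fc).
by apply: ereal_sup_ubound; exists t.
Qed.

End limf_esup_bounds.

Section integral_upper_bound.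
Local Open Scope ereal_scope.
Context {d : measure_display} {T : measurableType d} {R : realType}.
Variable mu : {measure set T -> \bar R}.
Import HBNNSimple.

(* No measurability of [f] is needed: the positive part is bounded through the
   simple functions below it, and the negative part only decreases the integral. *)
Lemma integral_le_cst (f : T -> R) (c : R) :
  (0 <= c)%R -> (forall x, f x <= c)%R ->
  \int[mu]_x (f x)%:E <= c%:E * mu setT.
Proof.
move=> c0 fc; rewrite integralE.
have neg_ge0 : 0 <= \int[mu]_x ((EFin \o f) ^\- x).
  by apply: integral_ge0 => x _; exact: funeneg_ge0.
apply: le_trans (leeB _ neg_ge0) _; last by rewrite sube0.
rewrite ge0_integralTE; last by move=> x; exact: funepos_ge0.
apply: ge_ereal_sup => _ [h /= h_le <-].
rewrite -[leRHS](integral_cst mu measurableT) -integralT_nnsfun.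
apply: ge0_le_integral => //.
- by move=> x _; rewrite lee_fin.
- by apply/measurable_EFinP; exact: measurable_funP.
- move=> x _; apply: le_trans (h_le x) _.
  by rewrite funeposE ge_max !lee_fin c0 fc.
Qed.

End integral_upper_bound.

Definition agree_on (T : Type) (w : nat) (x y : int -> T) : Prop :=
  forall j : int, (`|j| <= w)%N -> x j = y j.

Lemma cdist_lt (R : realType) (A : eqType) w (x y : int -> A) :
  agree_on w x y -> cdist R x y < (2%:R : R) ^- w.
Proof.
move=> xy; rewrite /cdist; set S := [set _ | _ in _].
have [[u Su]|S0] := pselect (S !=set0); last first.
  rewrite (_ : S = set0) ?sup0 ?invr_gt0 ?exprn_gt0 //.
  by apply/seteqP; split=> // u Su; apply: S0; exists u.
apply: (@le_lt_trans _ _ (2%:R ^- w.+1)); last first.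
  by rewrite ltf_pV2 ?posrE // ltr_eXn2l // ltr1n.
apply: ge_sup; first by exists u.
move=> _ [j /= /eqP xyj <-]; have wj : (w < `|j|)%N.
  by rewrite ltnNge; apply/negP => /xy.
by rewrite lef_pV2 ?posrE // ler_eXn2l // ltr1n.
Qed.

Lemma pos_expansive_orbit_eq (R : realType) (A : eqType)
    (F : (int -> A) -> int -> A) m :
  (forall x, Bn R F m x = [set x]) ->
  forall x y, (forall i, agree_on m (iter i F x) (iter i F y)) -> x = y.
Proof.
move=> Bm x y xy; have : Bn R F m x y by move=> i; exact: cdist_lt.
by rewrite Bm.
Qed.

Section compactness.
Variables (B : finType) (Q : nat -> set (int -> B)) (w : nat -> nat).
Hypothesis Q_neq0 : forall N, Q N !=set0.
Hypothesis Q_decr : forall N N', (N' <= N)%N -> Q N `<=` Q N'.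
Hypothesis Q_local : forall N x y, agree_on (w N) x y -> Q N x -> Q N y.

(* A strict window, so that every configuration is [extendable] from [k = 0]. *)
Let agree_below k (x y : int -> B) := forall j : int, (`|j| < k)%N -> x j = y j.

Let extendable k p := forall N, exists2 q, Q N q & agree_below k q p.

Let update k p (b : B * B) : int -> B :=
  fun j => if j == k%:Z then b.1 else if j == - k%:Z then b.2 else p j.

Let agree_below_update k p b : agree_below k (update k p b) p.
Proof.
move=> j jk; rewrite /update.
by case: ifP => [/eqP|_]; [lia|case: ifP => [/eqP|//]; lia].
Qed.

(* Pigeonhole on the finitely many ways to fill in the positions [k] and [-k]. *)
Let extendable_step k p : extendable k p ->
  exists2 p', extendable k.+1 p' & agree_below k p' p.
Proof.
move=> ext_p; apply: contrapT => no_ext.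
have bad b : exists N, forall q, Q N q -> ~ agree_below k.+1 q (update k p b).
  apply: contrapT => /forallNP good_b; apply: no_ext.
  exists (update k p b) => [N|]; last exact: agree_below_update.
  by have /existsPNP[q Qq /contrapT] := good_b N; exists q.
have [Nb Nb_bad] := choice bad.
have [q Qq qp] := ext_p (\max_b Nb b).
pose b := (q k%:Z, q (- k%:Z)).
apply: (Nb_bad b q); first by apply: Q_decr Qq; exact: leq_bigmax.
move=> j jk; rewrite /update; case: ifP => [/eqP -> //|/negbT/eqP jk1].
by case: ifP => [/eqP -> //|/negbT/eqP jk2]; apply: qp; lia.
Qed.

Lemma bigcap_local_neq0 : \bigcap_N Q N !=set0.
Proof.
have next kp : exists p', extendable kp.1 kp.2 ->
    extendable kp.1.+1 p' /\ agree_below kp.1 p' kp.2.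
  have [|not_ext] := pselect (extendable kp.1 kp.2).
    move=> /extendable_step[p' p'_ext p'_agree].
    by exists p' => _; split.
  by exists kp.2 => /not_ext.
have [nxt nxtP] := choice next.
have [z0 _] := Q_neq0 0.
pose P := fix P k := if k is k'.+1 then nxt (k', P k') else z0.
have P_ext k : extendable k (P k).
  elim: k => [N|k IH]; first by have [q Qq] := Q_neq0 N; exists q.
  exact: (nxtP (k, P k) IH).1.
have P_coh k d : agree_below k (P (k + d)%N) (P k).
  elim: d => [|d IH] j jk; first by rewrite addn0.
  rewrite addnS /= (nxtP ((k + d)%N, P (k + d)%N) (P_ext _)).2 /=; [exact: IH|lia].
pose z j := P `|j|.+1 j.
have z_agree k : agree_below k z (P k).
  move=> j jk; have := P_coh `|j|.+1 (k - `|j|.+1)%N j (ltnSn _).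
  by rewrite subnKC // => <-.
exists z => N _; have [q Qq qP] := P_ext (w N).+1 N.
by apply: Q_local Qq => j jw; rewrite qP // (z_agree (w N).+1).
Qed.

End compactness.

Section cellular_automaton.
Variables (A : Type) (r : nat) (f : (r.*2.+1)%N.-tuple A -> A).
Local Notation F := (cell_aut f).

Lemma iter_cell_aut_local i (x y : int -> A) j :
  (forall k, j - (i * r)%N%:Z <= k <= j + (i * r)%N%:Z -> x k = y k) ->
  iter i F x j = iter i F y j.
Proof.
elim: i x y j => [|i IH] x y j xy /=; first by apply: xy; lia.
rewrite /cell_aut; congr f; apply: eq_mktuple => k; apply: IH => k' k'j.
apply: xy; have := ltn_ord k; move: k'j; move: (nat_of_ord k) => kk.
rewrite -addnn; lia.
Qed.

Definition shift (c : int) (x : int -> A) : int -> A := fun j => x (j + c).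

Lemma cell_aut_shift c x : F (shift c x) = shift c (F x).
Proof.
apply: funext => j; rewrite /cell_aut /shift.
by congr f; apply: eq_mktuple => k; congr x; lia.
Qed.

Lemma iter_cell_aut_shift i c x : iter i F (shift c x) = shift c (iter i F x).
Proof. by elim: i => [|i /= ->] //; rewrite cell_aut_shift. Qed.

Definition orbit_agree (n w : nat) (x y : int -> A) : Prop :=
  forall i, (i <= n)%N -> agree_on w (iter i F x) (iter i F y).

Lemma orbit_agree_le n n' w x y :
  (n' <= n)%N -> orbit_agree n w x y -> orbit_agree n' w x y.
Proof. by move=> n'n xy i ni; apply: xy; exact: leq_trans ni n'n. Qed.

Lemma orbit_agree_local n w x x' y y' :
  agree_on (w + n * r) x x' -> agree_on (w + n * r) y y' ->
  orbit_agree n w x y -> orbit_agree n w x' y'.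
Proof.
move=> xx' yy' xy i ni j jw.
have loc z z' : agree_on (w + n * r) z z' -> iter i F z j = iter i F z' j.
  move=> zz'; apply: iter_cell_aut_local => k kj; apply: zz'.
  have : (i * r <= n * r)%N by exact: leq_mul.
  lia.
by rewrite -(loc _ _ xx') -(loc _ _ yy'); exact: xy.
Qed.

End cellular_automaton.

Section propagation.
Variables (A : Type) (r : nat) (f : (r.*2.+1)%N.-tuple A -> A) (m N : nat).
Local Notation F := (cell_aut f).
Hypothesis det : forall x y, orbit_agree f N m x y -> agree_on m.+1 x y.

(* Each step of the induction applies [det] translated to the centre
   [c = +-(w + t - m)]: agreement on [|j| <= w + t] during [N] more time steps
   yields agreement at [|j| = w + t + 1]. *)
Lemma orbit_agree_widen w t n x y : (m <= w)%N ->
  orbit_agree f (n + t * N) w x y -> orbit_agree f n (w + t) x y.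
Proof.
move=> mw; elim: t n => [|t IH] n xy i ni j jwt.
  by apply: xy; lia.
have {}xy : orbit_agree f (n + N) (w + t) x y.
  by apply: IH; apply: orbit_agree_le xy; lia.
have [jwt'|jwt'] := leqP `|j| (w + t); first by apply: xy; lia.
pose c : int := if 0 <= j then (w + t - m)%N%:Z else - (w + t - m)%N%:Z.
have := @det (shift c (iter i F x)) (shift c (iter i F y)) _ (j - c).
rewrite /shift subrK; apply; last by rewrite /c; case: (boolP (0 <= j)) => j0; lia.
move=> i' i'N j' j'm; rewrite !iter_cell_aut_shift /shift -!iterD.
by apply: xy; [lia|rewrite /c; case: (boolP (0 <= j)) => j0; lia].
Qed.

Lemma agree_on_determined w t x y : (m <= w)%N ->
  orbit_agree f (t * N) w x y -> agree_on (w + t) x y.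
Proof. by move=> mw xy; apply: (orbit_agree_widen mw (n := 0)) xy 0%N isT. Qed.

End propagation.

Section finite_time.
Variables (A : finType) (r : nat) (f : (r.*2.+1)%N.-tuple A -> A) (m : nat).
Local Notation F := (cell_aut f).
Hypothesis orbit_eq :
  forall x y, (forall i, agree_on m (iter i F x) (iter i F y)) -> x = y.

Let fst_cfg (z : int -> A * A) : int -> A := fun j => (z j).1.
Let snd_cfg (z : int -> A * A) : int -> A := fun j => (z j).2.

Lemma finite_time_determination :
  exists N, forall x y, orbit_agree f N m x y -> agree_on m.+1 x y.
Proof.
apply: contrapT => /forallNP no_N.
pose Q N := [set z | orbit_agree f N m (fst_cfg z) (snd_cfg z) /\
                     ~ agree_on m.+1 (fst_cfg z) (snd_cfg z)].
have Q_neq0 N : Q N !=set0.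
  have /existsNP[x /existsNP[y /not_implyP[xy not_xy]]] := no_N N.
  by exists (fun j => (x j, y j)).
have Q_decr N N' : (N' <= N)%N -> Q N `<=` Q N'.
  by move=> N'N z [zN nz]; split=> //; exact: orbit_agree_le zN.
have Q_local N z z' : agree_on (m.+1 + N * r) z z' -> Q N z -> Q N z'.
  move=> zz' [zN nz]; split.
    by apply: orbit_agree_local zN => j jw; rewrite /fst_cfg /snd_cfg zz' //; lia.
  by apply: contra_not nz => nz' j jm; rewrite /fst_cfg /snd_cfg zz'; [exact: nz'|lia].
have [z Qz] := bigcap_local_neq0 Q_neq0 Q_decr Q_local.
apply: (Qz 0%N I).2; rewrite (orbit_eq (x := fst_cfg z) (y := snd_cfg z)) // => i.
exact: (Qz i I).1 i (leqnn i).
Qed.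

End finite_time.

Lemma cspeed_mul_le (R : realType) (T : Type) (N n : nat) (x : T) :
  (0 < N)%N -> (N.*2 <= n)%N -> (cspeed (2 * N%:R : R)^-1 n x * N <= n)%N.
Proof.
move=> N_gt0 Nn; rewrite /cspeed; set c := Num.ceil _.
have N_gt0' : (0 : R) < N%:R by rewrite ltr0n.
have c_ge0 : 0 <= c.
  by rewrite ceil_ge0 (@lt_le_trans _ _ 0) // mulr_ge0 // invr_ge0 mulr_ge0.
have c_lt := ceilB1_lt ((2 * N%:R : R)^-1 * n%:R).
rewrite -/c mulrC ltr_pdivlMr ?mulr_gt0 // intrD in c_lt.
have Nn' : (2 * N%:R : R) <= n%:R by rewrite -natrM ler_nat mul2n.
by rewrite -(ler_nat R) natrM natr_absz ger0_norm //; nra.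
Qed.

Section Mnpd_bounds.
Variables (R : realType) (A : finType) (a0 : A).
Variables (mu : probability (Cfg a0) R) (F : Cfg a0 -> Cfg a0).

Lemma cylG_measurable (g : nat -> Cfg a0 -> nat) n p x :
  measurable (cylG g g n p x x).
Proof.
apply: sub_sigma_algebra; exists (g n x + p)%N, x.
by apply/seteqP; split=> z /= zx j jJ; apply: zx; rewrite /inJ in jJ *; lia.
Qed.

Lemma Mnpd_le1 (g : nat -> Cfg a0 -> nat) n p delta :
  (Mnpd mu F g g n p delta <= 1)%E.
Proof.
have integrand_le1 x : 1 - ln (countTGd mu F g g n delta p x)%:R /
    - ln (fine (mu (cylG g g n p x x))) <= 1.
  rewrite gerBl divr_ge0 //.
    by case: countTGd => [|k]; [rewrite ln0|apply: ln_ge0; rewrite ler1n].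
  rewrite oppr_ge0; apply: ln_le0.
  have := probability_le1 mu (cylG_measurable g n p x).
  by case: (mu _) (measure_ge0 mu (cylG g g n p x x)) => //= e; rewrite !lee_fin.
apply: le_trans (integral_le_cst mu ler01 integrand_le1) _.
by rewrite mul1e probability_le1.
Qed.

(* [ln 0 = 0]: configurations with no admissible word also contribute [1]. *)
Lemma Mnpd_eq1 gp gm n p delta :
  (forall x, (countTGd mu F gp gm n delta p x <= 1)%N) ->
  Mnpd mu F gp gm n p delta = 1%E.
Proof.
move=> count_le1; rewrite /Mnpd (eq_integral (cst 1%E)); last first.
  move=> x _; have := count_le1 x.
  by case: countTGd => [|[|//]] _; rewrite ?ln1 ?(ln0 (lexx 0)) mul0r subr0.
by rewrite integral_cst // mul1e; exact: probability_setT.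
Qed.

End Mnpd_bounds.

Section determined_words.
Variables (R : realType) (A : finType) (a0 : A) (r : nat).
Variables (f : (r.*2.+1)%N.-tuple A -> A) (mu : probability (Cfg a0) R) (m N : nat).
Hypothesis det : forall x y, orbit_agree f N m x y -> agree_on m.+1 x y.

Lemma countTGd_le1 (gp gm : nat -> Cfg a0 -> nat) n delta p x :
  (m <= p)%N -> (gp n x * N <= n)%N -> (gm n x * N <= n)%N ->
  (countTGd mu (cell_aut f) gp gm n delta p x <= 1)%N.
Proof.
move=> mp gpN gmN; rewrite /countTGd.
apply: (@leq_trans #|pred1 (wordJ gp gm n p x x)|); last by rewrite card1.
apply/subset_leq_card/fintype.subsetP => w; rewrite in_setE inE.
move=> /asboolP[z [[[y [xy zy]] _] <-]].
have yx : agree_on (p + maxn (gp n x) (gm n x)) y x.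
  by apply: (agree_on_determined det mp); apply: orbit_agree_le xy; lia.
apply/eqP/eq_mktuple => k; have := ltn_ord k; move: (nat_of_ord k) => {}k k_lt.
rewrite -addnn in k_lt; rewrite zy ?yx //; rewrite /inJ; lia.
Qed.

End determined_words.

Theorem proposition1 (R : realType) (A : finType) (a0 : A) (r : nat)
  (f : (r.*2.+1)%N.-tuple A -> A) (mu : probability (Cfg a0) R) :
  pos_expansive R (@cell_aut A r f) ->
  measure_ergodic mu (@sigma_shift A) ->
  measure_invariant mu (@cell_aut A r f) ->
  exists s : R, 0 < s /\
    Mmu mu (@cell_aut A r f) (@cspeed R (Cfg a0) s) (@cspeed R (Cfg a0) s) = 1%E.
Proof.
move=> [m Bm] _ _.
have [N det] := finite_time_determination (pos_expansive_orbit_eq Bm).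
have detS x y : orbit_agree f N.+1 m x y -> agree_on m.+1 x y.
  by move/(orbit_agree_le (leqnSn N)); exact: det.
exists (2 * N.+1%:R)^-1; split; first by rewrite invr_gt0 mulr_gt0 // ltr0n.
rewrite /Mmu; apply/le_anti/andP; split.
  apply: ge_ereal_sup => _ [p _ <-]; apply: limf_esup_le => delta.
  by apply: limf_esup_le => n; exact: Mnpd_le1.
apply: ereal_sup_ubound; exists m => //; apply: limf_esup_near_cst.
near=> delta; apply: limf_esup_near_cst; near=> n; apply: Mnpd_eq1 => x.
have Nn : (N.+1.*2 <= n)%N by near: n; exact: nbhs_infty_ge.
by apply: (countTGd_le1 mu detS) => //; exact: cspeed_mul_le.
Unshelve. all: by end_near.
Qed.
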